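(* For integers $0\le l\le m$ define $B_{l,m}:=\dfrac{A_{l,m}}{2^{l}(m+1-l)_{2l}}$. Then $B_{m,m}=1$, $B_{m-1,m}=2m+1$ (for $m\ge1$), $$B_{l-1,m}=(2m+1)B_{l,m}-(m-l)(m+l+1)B_{l+1,m}\qquad(1\le l\le m-1),$$ and every $B_{l,m}$ ($0\le l\le m$) is an odd integer.
   Context: $A_{l,m}=\frac{l!\,m!}{2^{m-l}}\sum_{k=l}^{m}2^{k}\binom{2m-2k}{m-k}\binom{m+k}{k}\binom{k}{l}$ (equivalently $l!m!2^{m+l}d_{l,m}$ with $d_{l,m}=2^{-2m}\sum_{k=l}^{m}2^{k}\binom{2m-2k}{m-k}\binom{m+k}{m}\binom{k}{l}$). $(x)_k=x(x+1)\cdots(x+k-1)$ for $k\ge1$, $(x)_0=1$. *)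

From mathcomp Require Import all_boot all_order all_algebra.
Set Implicit Arguments. Unset Strict Implicit. Unset Printing Implicit Defensive.
Import GRing.Theory Num.Theory.
Local Open Scope ring_scope.

Definition poch (x k : nat) : nat := (\prod_(i < k) (x + i))%N.

Definition Acoef (l m : nat) : rat :=
  (l`! * m`!)%N%:R / (2 ^ (m - l))%N%:R *
  (\sum_(l <= k < m.+1) (2 ^ k * 'C(2 * m - 2 * k, m - k) * 'C(m + k, k) * 'C(k, l))%N%:R).

Definition Bcoef (l m : nat) : rat :=
  Acoef l m / (2 ^ l * poch (m + 1 - l) (2 * l))%N%:R.

From mathcomp Require Import all_boot all_order all_algebra.
From mathcomp Require Import zify ring.
Set Implicit Arguments. Unset Strict Implicit. Unset Printing Implicit Defensive.

(* Write T(m,k,l) = 2^k C(2m-2k,m-k) C(m+k,k) C(k,l) and S(m,l) = sum_{k=l}^m T(m,k,l),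
   so that A_{l,m} = l! m! S(m,l) / 2^(m-l).  Since (m+1-l)_{2l} = (m+l)!/(m-l)!,
   B_{l,m} = w(l,m) S(m,l) with the weight w(l,m) = l! m! (m-l)! / (2^m (m+l)!).
   1. In l, the sums satisfy the three-term recurrence
        (m-l)(m+l+1) S_l + (l+1)(l+2) S_{l+2} = (2m+1)(l+1) S_{l+1}.
      Termwise it holds up to a telescoping correction G(k) - G(k+1) with
      G(k) = (l+1)(2m+1-2k) T(m,k,l+1); both reduce to binomial identities.
   2. The weights satisfy (m-l)(m+l+1) w(l+1,m) = (l+1) w(l,m), which turns the
      recurrence for S into the stated recurrence for B.
   3. Direct evaluation gives B_{m,m} = 1 and B_{m-1,m} = 2m+1.
   4. Since (m-l)+(m+l+1) = 2m+1 is odd, the coefficient (m-l)(m+l+1) is even,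
      so downward induction on l shows that every B_{l,m} is an odd integer. *)

Definition summand (m k l : nat) : nat :=
  2 ^ k * 'C(2 * m - 2 * k, m - k) * 'C(m + k, k) * 'C(k, l).

Definition Ssum (m l : nat) : nat := \sum_(l <= k < m.+1) summand m k l.

Lemma bin_mid_sym d : 'C((2 * d).+1, d) = 'C((2 * d).+1, d.+1).
Proof.
rewrite -bin_sub; last by lia.
by congr 'C(_, _); lia.
Qed.

Lemma bin_central_succ d :
  d.+1 * 'C((2 * d).+2, d.+1) = 2 * (2 * d).+1 * 'C(2 * d, d).
Proof.
rewrite binS bin_mid_sym addnn -mul2n mulnCA -mul_bin_diag; ring.
Qed.

Lemma binomial_three_term m k l : l <= m -> k <= m ->
  (m - l) * (m + l + 1) * 'C(k, l) + l.+1 * l.+2 * 'C(k, l.+2)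
    + l.+1 * (2 * m + 1 - 2 * k) * 'C(k, l.+1)
  = (2 * m + 1) * l.+1 * 'C(k, l.+1) + (m - k) * (m + k + 1) * 'C(k, l).
Proof.
move=> hl hk; case: (ltnP k l) => [hkl | hlk].
  by rewrite !bin_small ?muln0 //; lia.
have [d ->] : exists d, m = k + d by exists (m - k); lia.
have [j ->] : exists j, k = l + j by exists (k - l); lia.
case: j hk hlk => [|j] _ _.
  by rewrite addn0 (@bin_small l l.+1) ?(@bin_small l l.+2) // !muln0 !addn0.
have h1 : l.+1 * 'C(l + j.+1, l.+1) = j.+1 * 'C(l + j.+1, l).
  by rewrite mul_bin_left; congr (_ * _); lia.
have h2 : l.+2 * 'C(l + j.+1, l.+2) = j * 'C(l + j.+1, l.+1).
  by rewrite mul_bin_left; congr (_ * _); lia.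
rewrite (_ : l + j.+1 + d - l = j.+1 + d); last by lia.
rewrite (_ : l + j.+1 + d - (l + j.+1) = d); last by lia.
rewrite (_ : 2 * (l + j.+1 + d) + 1 - 2 * (l + j.+1) = (2 * d).+1); last by lia.
rewrite -[(_ + 1) * l.+1 * _]mulnA h1.
transitivity ((j.+1 + d) * (l + j.+1 + d + l + 1) * 'C(l + j.+1, l)
              + (j + (2 * d).+1) * (l.+1 * 'C(l + j.+1, l.+1))).
  by rewrite -[l.+1 * l.+2 * _]mulnA h2; ring.
by rewrite h1; ring.
Qed.

(* The certificate identity: G(k+1) = (m-k)(m+k+1) T(m,k,l), which lets the
   defect of the binomial relation telescope in k. *)
Lemma summand_shift m k l : k <= m ->
  l.+1 * (2 * m + 1 - 2 * k.+1) * summand m k.+1 l.+1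
  = (m - k) * (m + k + 1) * summand m k l.
Proof.
move=> hk; have [d ->] : exists d, m = k + d by exists (m - k); lia.
case: d => [|d]; first by rewrite addn0 subnn (_ : 2 * k + 1 - 2 * k.+1 = 0); lia.
rewrite /summand (_ : 2 * (k + d.+1) + 1 - 2 * k.+1 = (2 * d).+1); last by lia.
rewrite (_ : 2 * (k + d.+1) - 2 * k.+1 = 2 * d); last by lia.
rewrite (_ : 2 * (k + d.+1) - 2 * k = (2 * d).+2); last by lia.
rewrite (_ : k + d.+1 - k.+1 = d); last by lia.
rewrite (_ : k + d.+1 - k = d.+1); last by lia.
rewrite (_ : k + d.+1 + k.+1 = (2 * k + d).+2); last by lia.
rewrite (_ : k + d.+1 + k = (2 * k + d).+1); last by lia.
have hmid : (2 * k + d).+2 * 'C((2 * k + d).+1, k) = k.+1 * 'C((2 * k + d).+2, k.+1).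
  exact: mul_bin_diag.
have hlow : k.+1 * 'C(k, l) = l.+1 * 'C(k.+1, l.+1) by exact: mul_bin_diag.
have hcen := bin_central_succ d.
apply/eqP; rewrite -(eqn_pmul2l (ltn0Sn k)); apply/eqP.
transitivity (2 ^ k * (d.+1 * 'C((2 * d).+2, d.+1))
  * ((2 * k + d).+2 * 'C((2 * k + d).+1, k)) * (k.+1 * 'C(k, l))); last by ring.
rewrite hcen hmid hlow expnS; ring.
Qed.

Lemma summand_three_term m k l : l <= m -> k <= m ->
  let G k := l.+1 * (2 * m + 1 - 2 * k) * summand m k l.+1 in
  (m - l) * (m + l + 1) * summand m k l + l.+1 * l.+2 * summand m k l.+2 + G k
  = (2 * m + 1) * l.+1 * summand m k l.+1 + G k.+1.
Proof.
move=> hl hk G; rewrite /G summand_shift // /summand.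
set P := 2 ^ k * _ * _.
transitivity (P * ((m - l) * (m + l + 1) * 'C(k, l) + l.+1 * l.+2 * 'C(k, l.+2)
    + l.+1 * (2 * m + 1 - 2 * k) * 'C(k, l.+1))); first by ring.
rewrite binomial_three_term //; ring.
Qed.

Lemma summand_small m k l : k < l -> summand m k l = 0.
Proof. by move=> hkl; rewrite /summand (bin_small hkl) muln0. Qed.

Lemma Ssum_from0 m l : Ssum m l = \sum_(0 <= k < m.+1) summand m k l.
Proof.
have vanish n : n <= l -> \sum_(0 <= k < n) summand m k l = 0.
  move=> hn; rewrite big_nat big1 // => k /andP[_ hk].
  exact/summand_small/(leq_trans hk).
rewrite /Ssum; case: (leqP l m.+1) => hl.
  by rewrite [RHS](@big_cat_nat _ _ _ l 0 m.+1 _ _ (leq0n l) hl) /= vanish.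
by rewrite big_geq ?(ltnW hl) // vanish // ltnW.
Qed.

(* Step 1: the three-term recurrence for S(m,.); G(0) = G(m+1) = 0. *)
Lemma Ssum_recurrence m l : l < m ->
  (m - l) * (m + l + 1) * Ssum m l + l.+1 * l.+2 * Ssum m l.+2
  = (2 * m + 1) * l.+1 * Ssum m l.+1.
Proof.
move=> hlm; rewrite !Ssum_from0 !big_distrr -big_split /=.
pose G k := l.+1 * (2 * m + 1 - 2 * k) * summand m k l.+1.
have telescope : \sum_(0 <= k < m.+1) G k = \sum_(0 <= k < m.+1) G k.+1.
  rewrite big_nat_recl // big_nat_recr //= /G summand_small // muln0.
  by rewrite (_ : 2 * m + 1 - 2 * m.+1 = 0) ?muln0 ?mul0n //; lia.
apply/eqP; rewrite -(eqn_add2r (\sum_(0 <= k < m.+1) G k)) -big_split /=.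
rewrite telescope -big_split /=; apply/eqP/eq_big_nat => k /andP[_ hk].
exact: summand_three_term (ltnW hlm) hk.
Qed.

Lemma poch_fact x n : x`! * poch x.+1 n = (x + n)`!.
Proof.
elim: n => [|n IH]; first by rewrite /poch big_ord0 muln1 addn0.
by rewrite /poch big_ord_recr /= -/(poch x.+1 n) mulnA IH addnS factS; ring.
Qed.

Import GRing.Theory Num.Theory.
Local Open Scope ring_scope.

Definition weight (l m : nat) : rat :=
  (l`! * m`! * (m - l)`!)%N%:R / (2 ^ m * (m + l)`!)%N%:R.

Lemma natr_neq0 (n : nat) : (0 < n)%N -> (n%:R : rat) != 0.
Proof. by rewrite pnatr_eq0 -lt0n. Qed.

Lemma Bcoef_weight l m : (l <= m)%N -> Bcoef l m = weight l m * (Ssum m l)%:R.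
Proof.
move=> hl; rewrite /Bcoef /Acoef /weight -natr_sum -/(Ssum m l).
have hpoch : (m + 1 - l)%N = (m - l).+1 by lia.
have hfact : ((m - l)`! * poch (m - l).+1 (2 * l) = (m + l)`!)%N.
  by rewrite poch_fact; congr _`!; lia.
have hpow : (2 ^ m = 2 ^ (m - l) * 2 ^ l)%N by rewrite -expnD subnK.
rewrite hpoch -hfact hpow !natrM.
have hp : (0 < poch (m - l).+1 (2 * l))%N by rewrite prodn_gt0.
move: (poch _ _) hp => p hp; field.
by rewrite !natr_neq0 ?expn_gt0 ?fact_gt0.
Qed.

Lemma weight_step l m : (l < m)%N ->
  ((m - l) * (m + l + 1))%N%:R * weight l.+1 m = l.+1%:R * weight l m.
Proof.
move=> hlm; rewrite /weight.
have -> : (m - l = (m - l.+1).+1)%N by lia.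
rewrite addn1 addnS !factS !natrM.
have hf1 := natr_neq0 (fact_gt0 (m + l)).
have hf2 := natr_neq0 (fact_gt0 (m - l.+1)).
field.
by rewrite hf1 -natrD nat1r !natr_neq0 ?expn_gt0.
Qed.

Lemma Bcoef_recurrence l m : (l.+2 <= m)%N ->
  Bcoef l m = (2 * m + 1)%N%:R * Bcoef l.+1 m
              - ((m - l.+1) * (m + l.+1 + 1))%N%:R * Bcoef l.+2 m.
Proof.
move=> hlm; have hl1 : (l < m)%N by lia.
have hl0 : 1 + l%:R != 0 :> rat by rewrite nat1r natr_neq0.
have hw0 : weight l m = ((m - l) * (m + l + 1))%N%:R * weight l.+1 m / l.+1%:R.
  by rewrite weight_step // mulrC mulKf // -nat1r.
have hS : ((m - l) * (m + l + 1) * Ssum m l)%N%:R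
          = ((2 * m + 1) * l.+1 * Ssum m l.+1)%N%:R
            - (l.+1 * l.+2 * Ssum m l.+2)%N%:R :> rat.
  by rewrite -(Ssum_recurrence hl1) natrD addrK.
rewrite !Bcoef_weight //; try lia.
rewrite [_ * (weight l.+2 m * _)]mulrA weight_step // hw0.
transitivity (weight l.+1 m * ((m - l) * (m + l + 1) * Ssum m l)%N%:R / l.+1%:R).
  by rewrite natrM; field.
by rewrite hS !natrM; field.
Qed.

Lemma Bcoef_diag m : Bcoef m m = 1.
Proof.
rewrite Bcoef_weight // /weight /Ssum big_nat1 /summand !subnn bin0 binn muln1.
have hc := bin_fact (leq_addr m m); rewrite addnK in hc.
rewrite mulrAC -natrM (_ : (m`! * m`! * 0`! * (2 ^ m * 1 * 'C(m + m, m)))%N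
                          = (2 ^ m * (m + m)`!)%N).
  by rewrite divff // natr_neq0 // muln_gt0 expn_gt0 fact_gt0.
by rewrite -hc fact0; ring.
Qed.

(* S(m+1,m) = 2^(m+1) (2m+3) C(2m+1,m). *)
Lemma Bcoef_subdiag n : Bcoef n n.+1 = (2 * n.+1 + 1)%N%:R.
Proof.
rewrite Bcoef_weight // /weight /Ssum big_nat_recl // big_nat1 /summand.
rewrite subSnn !subnn binn bin0 (_ : 2 * n.+1 - 2 * n = 2)%N; last by lia.
rewrite (_ : n.+1 + n = (2 * n).+1)%N; last by lia.
rewrite (_ : n.+1 + n.+1 = (2 * n).+2)%N; last by lia.
have hc : ('C((2 * n).+1, n) * (n`! * n.+1`!) = (2 * n).+1`!)%N.
  have := @bin_fact (2 * n).+1 n; rewrite (_ : (2 * n).+1 - n = n.+1)%N; last by lia.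
  by apply; lia.
have hcen : 'C((2 * n).+2, n.+1) = (2 * 'C((2 * n).+1, n))%N.
  by rewrite binS -bin_mid_sym addnn -mul2n.
rewrite hcen mulrAC -natrM.
rewrite (_ : (_ * _)%N = ((2 * n.+1 + 1) * (2 ^ n.+1 * (2 * n).+1`!))%N).
  by rewrite natrM mulfK // natr_neq0 // muln_gt0 expn_gt0 fact_gt0.
by rewrite -hc expnS !binSn (_ : 1`! = 1)%N //; ring.
Qed.

Definition odd_integer (q : rat) : Prop := exists w : int, q = (2 * w + 1)%:~R.

Lemma odd_integer_comb (a c : nat) (x y : rat) : odd a -> ~~ odd c ->
  odd_integer x -> odd_integer y -> odd_integer (a%:R * x - c%:R * y).
Proof.
move=> ha hc [w1 ->] [w0 ->].
have [a' ->] : exists a', a = (2 * a' + 1)%N.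
  by exists a./2; rewrite -{1}(odd_double_half a) ha -mul2n addnC.
have [c' ->] : exists c', c = (2 * c')%N.
  by exists c./2; rewrite -{1}(odd_double_half c) (negbTE hc) -mul2n.
exists (a'%:Z * (2 * w1 + 1) + w1 - c'%:Z * (2 * w0 + 1)).
by rewrite !pmulrn -!intrM -intrB; congr _%:~R; ring.
Qed.

Lemma odd_integer_absz (q : rat) : odd_integer q -> exists z : int, odd (absz z) /\ q = z%:~R.
Proof. by move=> [w ->]; exists (2 * w + 1); split => //; lia. Qed.

(* The factors m-l and m+l+1 have odd sum 2m+1, so their product is even. *)
Lemma recurrence_coef_even m l : (l <= m)%N -> ~~ odd ((m - l) * (m + l + 1)).
Proof.
move=> hl; rewrite oddM negb_and.
have : odd (m - l + (m + l + 1)) by lia.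
by rewrite oddD; case: (odd (m - l)); case: (odd _).
Qed.

Lemma Bcoef_odd m l : (l <= m)%N -> odd_integer (Bcoef l m).
Proof.
move=> hl; rewrite -(subKn hl); move: (m - l)%N (leq_subr l m) => j; clear hl.
elim/ltn_ind: j => -[|[|i]] IH hj.
- by exists 0; rewrite subn0 Bcoef_diag.
- clear IH; case: m hj => // n _; exists n.+1%:Z.
  by rewrite subn1 Bcoef_subdiag pmulrn; congr _%:~R; lia.
rewrite Bcoef_recurrence; last by lia.
apply: odd_integer_comb.
- by rewrite oddD oddM.
- by apply: recurrence_coef_even; lia.
- by rewrite (_ : (m - i.+2).+1 = m - i.+1)%N; [apply: IH | ]; lia.
- by rewrite (_ : (m - i.+2).+2 = m - i)%N; [apply: IH | ]; lia.
Qed.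

Theorem mainTheorem10 (m : nat) :
  Bcoef m m = 1 /\
  ((1 <= m)%N -> Bcoef (m - 1) m = (2 * m + 1)%N%:R) /\
  (forall l : nat, (1 <= l)%N -> (l <= m - 1)%N ->
     Bcoef (l - 1) m = (2 * m + 1)%N%:R * Bcoef l m
                       - ((m - l) * (m + l + 1))%N%:R * Bcoef l.+1 m) /\
  (forall l : nat, (l <= m)%N ->
     exists z : int, odd `|z|%N /\ Bcoef l m = z%:~R).
Proof.
split; first exact: Bcoef_diag.
split; first by case: m => // n _; rewrite subn1 Bcoef_subdiag.
split; first by case=> // l _ hl; rewrite subn1 Bcoef_recurrence //; lia.
by move=> l hl; apply/odd_integer_absz/Bcoef_odd.
Qed.
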